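(* Let $P,\tilde P\in\mathbb{R}^{n\times m}$ with $\mathrm{rank}(P)=n$, and let $\Omega=c+G\mathbf{B}_p$ with $c\in\mathbb{R}^m$, $G\in\mathbb{R}^{m\times p}$, $\mathrm{rank}(G)=m$. Assume $\|(\tilde P-P)c\|\le\|PG\|_l$. Then $\tilde P(c+\alpha G\mathbf{B}_p)\subseteq P\Omega$ for every $\alpha\in[0,\alpha_m]$, where $$\alpha_m=\frac{\|PG\|_l-\|(\tilde P-P)c\|}{\|PG\|_l+\|(\tilde P-P)G\|}.$$
   Context: A norm $\|\cdot\|$ is fixed on each $\mathbb{R}^k$; $\mathbf{B}_k$ is its closed unit ball, and matrices carry the induced operator norms $\|M\|=\sup_{\|x\|\le1}\|Mx\|$. For $M\in\mathbb{R}^{n\times m}\setminus\{0\}$ the matrix lower bound is $\|M\|_l=\max\{\mu\in\mathbb{R}:\ \forall y\in\mathrm{col}(M)\ \exists x\in\mathbb{R}^m \text{ with } Mx=y \text{ and } \mu\|x\|\le\|y\|\}$, where $\mathrm{col}(M)$ is the column space. Minkowski sums and images of sets under matrices are used. *)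

From HB Require Import structures.
From mathcomp Require Import all_boot all_order all_algebra.
From mathcomp Require Import boolp classical_sets reals.
Set Implicit Arguments. Unset Strict Implicit. Unset Printing Implicit Defensive.
Import Order.TTheory GRing.Theory Num.Theory.
Local Open Scope ring_scope.
Local Open Scope classical_set_scope.

Section Defs.
Variable R : realType.

Definition is_norm (k : nat) (N : 'cV[R]_k -> R) : Prop :=
  [/\ forall x y, N (x + y) <= N x + N y,
      forall (a : R) x, N (a *: x) = `|a| * N x
    & forall x, N x = 0 -> x = 0].

Definition norm_family (nrm : forall k, 'cV[R]_k -> R) : Prop :=
  forall k, is_norm (nrm k).

Local Unset Implicit Arguments.
Variable nrm : forall k, 'cV[R]_k -> R.
Local Set Implicit Arguments.

Definition unit_ball (k : nat) : set 'cV[R]_k := [set x | nrm k x <= 1].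

Definition opnorm (n m : nat) (M : 'M[R]_(n, m)) : R :=
  sup [set nrm n (M *m x) | x in @unit_ball m].

Definition lb_set (n m : nat) (M : 'M[R]_(n, m)) : set R :=
  [set mu | forall y : 'cV[R]_n, (exists z, M *m z = y) ->
              exists x : 'cV[R]_m, M *m x = y /\ mu * nrm m x <= nrm n y].

(* matrix lower bound ||M||_l = max (lb_set M); the max exists for M <> 0,
   so it coincides with the supremum *)
Definition mx_lbound (n m : nat) (M : 'M[R]_(n, m)) : R := sup (lb_set M).

Definition msum (k : nat) (A B : set 'cV[R]_k) : set 'cV[R]_k :=
  [set a + b | a in A & b in B].
Definition sscale (k : nat) (a : R) (A : set 'cV[R]_k) : set 'cV[R]_k :=
  [set a *: x | x in A].
Definition mx_img (n m : nat) (M : 'M[R]_(n, m)) (A : set 'cV[R]_m)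
  : set 'cV[R]_n := [set M *m x | x in A].

End Defs.
Arguments unit_ball {R} nrm k.

(* A point of Pt (c + alpha G B) is Pt c + alpha Pt G b = P (c + alpha G b) + w with
   w = (Pt - P) c + alpha (Pt - P) G b, so ||w|| <= ||(Pt - P) c|| + alpha ||(Pt - P) G||.
   Since P and G have full row rank, P G is onto, and its lower bound L is attained: a
   minimal-norm preimage exists by compactness (all norms on R^p are equivalent), so
   w = P G z with L ||z|| <= ||w||.  The bound alpha <= alpha_m is exactly what makes
   ||z|| <= 1 - alpha, hence z + alpha b lies in the unit ball and
   Pt (c + alpha G b) = P (c + G (z + alpha b)). *)
From HB Require Import structures.
From mathcomp Require Import all_boot all_order all_algebra.
From mathcomp Require Import all_classical all_reals topology normedtype derive.
From mathcomp Require Import lra.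
Set Implicit Arguments. Unset Strict Implicit. Unset Printing Implicit Defensive.
Import Order.TTheory GRing.Theory Num.Theory.
Import numFieldNormedType.Exports.
Local Open Scope ring_scope.
Local Open Scope classical_set_scope.

Section NormFunction.
Variables (R : realType) (k : nat) (N : 'cV[R]_k -> R).
Hypothesis N_norm : is_norm N.

Lemma normf0 : N 0 = 0.
Proof. by case: N_norm => _ NZ _; rewrite -(scale0r 0) NZ normr0 mul0r. Qed.

Lemma normfN x : N (- x) = N x.
Proof. by case: N_norm => _ NZ _; rewrite -scaleN1r NZ normrN normr1 mul1r. Qed.

Lemma normf_ge0 x : 0 <= N x.
Proof.
case: N_norm => ND _ _; have := ND x (- x).
by rewrite subrr normf0 normfN -mulr2n pmulrn_lge0.
Qed.

Lemma normf_gt0 x : x != 0 -> 0 < N x.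
Proof.
case: N_norm => _ _ N_eq0 x_neq0; rewrite lt_def normf_ge0 andbT.
by apply: contra x_neq0 => /eqP/N_eq0 ->.
Qed.

Lemma ler_dist_normf x y : `|N x - N y| <= N (x - y).
Proof.
case: N_norm => ND _ _; rewrite ler_norml; apply/andP; split.
  by have := ND (y - x) x; rewrite subrK -opprB normfN; lra.
by have := ND (x - y) y; rewrite subrK; lra.
Qed.

Lemma ger0_normfZ (a : R) x : 0 <= a -> N (a *: x) = a * N x.
Proof. by case: N_norm => _ NZ _ a_ge0; rewrite NZ ger0_norm. Qed.

Lemma ler_normf_sum (I : Type) (r : seq I) (F : I -> 'cV[R]_k) :
  N (\sum_(i <- r) F i) <= \sum_(i <- r) N (F i).
Proof.
case: N_norm => ND _ _; elim/big_rec2: _ => [|i y1 y2 _ IH]; first by rewrite normf0.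
by apply: le_trans (ND _ _) _; rewrite lerD2l.
Qed.

Lemma normf_mulmx_le (q : nat) (M : 'M[R]_(k, q)) (x : 'cV[R]_q) (b : R) :
  (forall j, `|x j 0| <= b) -> N (M *m x) <= b * \sum_j N (col j M).
Proof.
case: N_norm => _ NZ _ x_le.
have -> : M *m x = \sum_j x j 0 *: col j M.
  apply/matrixP => i l; rewrite !mxE summxE; apply: eq_bigr => j _.
  by rewrite !mxE (ord1 l) mulrC.
apply: le_trans (ler_normf_sum _ _) _; rewrite mulr_sumr; apply: ler_sum => j _.
by rewrite NZ ler_wpM2r ?normf_ge0.
Qed.

End NormFunction.

Section FiniteDimensionalNorms.
Variable R : realType.

Lemma mx_norm_entry_le (m n : nat) (x : 'M[R]_(m, n)) i j : `|x i j| <= `|x|.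
Proof.
by rewrite [leRHS]/Num.Def.normr /= mx_normrE; apply/bigmax_geP; right; exists (i, j).
Qed.

Lemma lipschitz_continuous (V : normedModType R) (K : R) (h : V -> R) :
  (forall u v, `|h u - h v| <= K * `|u - v|) -> continuous h.
Proof.
move=> h_lip x; apply/cvgrPdist_lt => e e_gt0.
have k_gt0 : 0 < `|K| + 1 by rewrite ltr_pwDr.
have := @cvgr_dist_lt _ _ _ (nbhs x) (nbhs_filter x) id x (@cvg_id _ (nbhs x)) _
  (divr_gt0 e_gt0 k_gt0).
apply: filterS => t; rewrite ltr_pdivlMr // => xt.
apply: le_lt_trans (h_lip x t) _.
by have := ler_norm K; have := normr_ge0 (x - t); nra.
Qed.

(* Vectors of R^q are handled through their transposes, the row vectors ['rV_q],
   on which the topology and compactness theory of the library is set up. *)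
Lemma normf_mulmx_tr_le (k q : nat) (N : 'cV[R]_k -> R) (N_norm : is_norm N)
    (M : 'M[R]_(k, q)) (v : 'rV[R]_q) :
  N (M *m v^T) <= `|v| * \sum_j N (col j M).
Proof. by apply: normf_mulmx_le => // j; rewrite mxE mx_norm_entry_le. Qed.

Lemma continuous_normf_mulmx (k q : nat) (N : 'cV[R]_k -> R) (N_norm : is_norm N)
    (M : 'M[R]_(k, q)) (w : 'cV[R]_k) :
  continuous (fun v : 'rV[R]_q => N (M *m v^T - w)).
Proof.
apply: (@lipschitz_continuous _ (\sum_j N (col j M))) => u v.
apply: le_trans (ler_dist_normf N_norm _ _) _.
by rewrite opprB addrA subrK -mulmxBr -linearB mulrC normf_mulmx_tr_le.
Qed.

Lemma continuous_normf_tr (k : nat) (N : 'cV[R]_k -> R) (N_norm : is_norm N) :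
  continuous (fun v : 'rV[R]_k => N v^T).
Proof.
have -> : (fun v : 'rV[R]_k => N v^T) = (fun v => N (1%:M *m v^T - 0)).
  by apply: funext => v; rewrite mul1mx subr0.
exact: continuous_normf_mulmx.
Qed.

Variables (n q : nat) (Nn : 'cV[R]_n -> R) (Nq : 'cV[R]_q -> R).
Hypotheses (Nn_norm : is_norm Nn) (Nq_norm : is_norm Nq).

(* Nq attains its minimum on the compact unit sphere of the max-norm. *)
Lemma mx_norm_le_normf : exists2 C, 0 < C & forall v : 'rV[R]_q, `|v| <= C * Nq v^T.
Proof.
case: q Nq Nq_norm => [|q'] N N_norm.
  by exists 1 => // v; rewrite thinmx0 normr0 mul1r normf_ge0.
pose S := [set v : 'rV[R]_q'.+1 | `|v| = 1].
have unit_scale (v : 'rV[R]_q'.+1) : v != 0 -> S (`|v|^-1 *: v).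
  by move=> v_neq0; rewrite /S /= normrZ normfV normr_id mulVf ?normr_eq0.
have S_neq0 : S !=set0.
  exists (`|const_mx 1 : 'rV[R]_q'.+1|^-1 *: const_mx 1); apply: unit_scale.
  by apply/eqP => /matrixP/(_ 0 0); rewrite !mxE; apply/eqP; exact: oner_neq0.
have S_compact : compact S.
  apply: bounded_closed_compact.
    by exists 1; split => // M M_gt1 v Sv /=; rewrite Sv ltW.
  apply: (@preimage_closed _ _ (fun v : 'rV[R]_q'.+1 => `|v|) [set x | x = 1]).
    by move=> x _; exact: norm_continuous.
  exact: closed_eq.
have [v0 /set_mem Sv0 v0_min] :=
  compact_EVT_min S_neq0 S_compact (continuous_subspaceT (continuous_normf_tr N_norm)).
have v0_gt0 : 0 < N v0^T.
  apply: normf_gt0 => //; rewrite trmx_eq0; apply/eqP => v0_eq0.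
  by move: Sv0; rewrite /S /= v0_eq0 normr0 => /eqP; rewrite eq_sym oner_eq0.
exists (N v0^T)^-1; first by rewrite invr_gt0.
move=> v; have [->|v_neq0] := eqVneq v 0.
  by rewrite normr0 mulr_ge0 ?normf_ge0 // invr_ge0 ltW.
have := v0_min _ (mem_set (unit_scale _ v_neq0)).
rewrite linearZ /= ger0_normfZ ?invr_ge0 ?normr_ge0 //.
by rewrite ler_pdivlMl ?normr_gt0 // => v0_le; rewrite ler_pdivlMl // mulrC.
Qed.

Lemma normf_mulmx_bounded (M : 'M[R]_(n, q)) :
  exists2 K, 0 <= K & forall x, Nn (M *m x) <= K * Nq x.
Proof.
have [C C_gt0 C_dom] := mx_norm_le_normf.
have S_ge0 : 0 <= \sum_j Nn (col j M).
  by apply: sumr_ge0 => j _; exact: normf_ge0 Nn_norm _.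
exists (C * \sum_j Nn (col j M)) => [|x]; first exact: mulr_ge0 (ltW C_gt0) S_ge0.
rewrite -[x in M *m x]trmxK; apply: le_trans (normf_mulmx_tr_le Nn_norm _ _) _.
by rewrite mulrAC ler_wpM2r // -[x in Nq x]trmxK C_dom.
Qed.

Lemma exists_min_normf_solution (M : 'M[R]_(n, q)) (w : 'cV[R]_n) (z1 : 'cV[R]_q) :
  M *m z1 = w -> exists2 z0, M *m z0 = w & forall z, M *m z = w -> Nq z0 <= Nq z.
Proof.
move=> Mz1.
pose A := [set v : 'rV[R]_q | Nn (M *m v^T - w) = 0] `&` [set v | Nq v^T <= Nq z1].
have A_z1 : A z1^T by split; rewrite /= trmxK // Mz1 subrr normf0.
have A_compact : compact A.
  apply: bounded_closed_compact.
    have [C C_gt0 C_dom] := mx_norm_le_normf.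
    exists (C * Nq z1); split.
      by rewrite ger0_real // mulr_ge0 ?(ltW C_gt0) ?(normf_ge0 Nq_norm).
    move=> r r_gt v [_ Av] /=; apply: le_trans (C_dom v) _.
    by apply/ltW/(le_lt_trans _ r_gt); rewrite ler_wpM2l // ltW.
  apply: closedI.
    apply: (@preimage_closed _ _ (fun v : 'rV[R]_q => Nn (M *m v^T - w)) [set x | x = 0]).
      by move=> v _; exact: continuous_normf_mulmx.
    exact: closed_eq.
  apply: (@preimage_closed _ _ (fun v : 'rV[R]_q => Nq v^T) [set x | x <= Nq z1]).
    by move=> v _; exact: continuous_normf_tr.
  exact: closed_le.
have [v0 /set_mem [Mv0 v0_le] v0_min] :=
  compact_EVT_min (ex_intro _ _ A_z1) A_compact
    (continuous_subspaceT (continuous_normf_tr Nq_norm)).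
exists v0^T.
  by apply/eqP; rewrite -subr_eq0; apply/eqP; case: Nn_norm => _ _; apply.
move=> z Mz.
have [z_le|z_gt] := leP (Nq z) (Nq z1); last exact: le_trans v0_le (ltW z_gt).
by rewrite -[z]trmxK; apply/v0_min/mem_set; split; rewrite /= trmxK // Mz subrr normf0.
Qed.

End FiniteDimensionalNorms.

Section InducedBounds.
Variable R : realType.
Local Unset Implicit Arguments.
Variable nrm : forall k, 'cV[R]_k -> R.
Local Set Implicit Arguments.
Hypothesis nrm_norm : norm_family nrm.
Variables (n q : nat) (M : 'M[R]_(n, q)).

Lemma opnorm_ub x : nrm q x <= 1 -> nrm n (M *m x) <= opnorm nrm M.
Proof.
move=> x_le1; apply: sup_upper_bound; last by exists x.
split; first by exists (nrm n (M *m 0)), 0; rewrite // /unit_ball /= (normf0 (nrm_norm q)).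
have [K K_ge0 MK] := normf_mulmx_bounded (nrm_norm n) (nrm_norm q) M.
by exists K => _ [x' x'_le1 <-]; apply: le_trans (MK x') _; rewrite ler_piMr.
Qed.

Lemma opnorm_ge0 : 0 <= opnorm nrm M.
Proof.
by have := @opnorm_ub 0; rewrite mulmx0 !normf0 //; apply.
Qed.

(* The supremum defining the lower bound is attained at a minimal-norm preimage. *)
Lemma mx_lbound_attained (y : 'cV[R]_n) (z : 'cV[R]_q) : M *m z = y ->
  exists2 x, M *m x = y & mx_lbound nrm M * nrm q x <= nrm n y.
Proof.
move=> Mz; have [x0 Mx0 x0_min] :=
  exists_min_normf_solution (nrm_norm n) (nrm_norm q) Mz.
exists x0 => //; have [x0_eq0|x0_neq0] := eqVneq x0 0.
  by rewrite x0_eq0 normf0 // mulr0 normf_ge0.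
have x0_gt0 := normf_gt0 (nrm_norm q) x0_neq0.
rewrite -ler_pdivlMr //; apply: ge_sup.
  by exists 0 => y' [z' <-]; exists z'; split; rewrite // mul0r normf_ge0.
move=> mu mu_lb; have [x [Mx mux]] := mu_lb y (ex_intro _ z Mz).
have [mu_le0|mu_gt0] := leP mu 0.
  by apply: le_trans mu_le0 _; rewrite divr_ge0 ?normf_ge0.
by rewrite ler_pdivlMr //; apply: le_trans mux; rewrite ler_pM2l // x0_min.
Qed.

Lemma mx_lbound_preimage_le (y : 'cV[R]_n) (s : R) : (exists z, M *m z = y) ->
  0 <= s -> nrm n y <= mx_lbound nrm M * s -> exists2 x, M *m x = y & nrm q x <= s.
Proof.
move=> [z Mz] s_ge0 y_le; have [L_gt0|L_le0] := ltP 0 (mx_lbound nrm M).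
  have [x Mx Lx] := mx_lbound_attained Mz.
  by exists x => //; rewrite -(ler_pM2l L_gt0); apply: le_trans Lx y_le.
have y_eq0 : y = 0.
  case: (nrm_norm n) => _ _; apply; apply/le_anti; rewrite normf_ge0 // andbT.
  by apply: le_trans y_le _; rewrite mulr_le0_ge0.
by exists 0; rewrite ?mulmx0 ?y_eq0 ?normf0.
Qed.

End InducedBounds.

(* This inequality is what the choice of alpha_m is made for; when L + K = 0,
   division by zero gives alpha_m = 0. *)
Lemma alpha_m_bound (R : realFieldType) (L a K alpha : R) :
  0 <= a -> a <= L -> 0 <= K -> 0 <= alpha -> alpha <= (L - a) / (L + K) ->
  alpha <= 1 /\ a + alpha * K <= L * (1 - alpha).
Proof.
move=> a_ge0 a_le K_ge0 alpha_ge0; have [LK_eq0|LK_neq0] := eqVneq (L + K) 0.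
  rewrite LK_eq0 invr0 mulr0 => alpha_le0.
  have [L_eq0 K_eq0] : L = 0 /\ K = 0 by lra.
  by rewrite L_eq0 K_eq0 mulr0 mul0r; lra.
have LK_gt0 : 0 < L + K by rewrite lt_def LK_neq0 /=; lra.
by rewrite ler_pdivlMr // mulrDr => alpha_le; split; nra.
Qed.

Lemma mulmx_row_free_pinv (F : fieldType) (n m p : nat)
    (P : 'M[F]_(n, m)) (G : 'M[F]_(m, p)) :
  row_free P -> row_free G -> P *m G *m (pinvmx G *m pinvmx P) = 1%:M.
Proof.
move=> /mulmxVp PP' /mulmxVp GG'; move: (pinvmx P) (pinvmx G) PP' GG' => P' G' PP' GG'.
by rewrite mulmxA -(mulmxA P) GG' mulmx1 PP'.
Qed.

Theorem lemma6 (R : realType) (nrm : forall k, 'cV[R]_k -> R)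
  (Hnrm : norm_family nrm) (n m p : nat)
  (P Pt : 'M[R]_(n, m)) (c : 'cV[R]_m) (G : 'M[R]_(m, p))
  (HP : \rank P = n) (HG : \rank G = m)
  (Hc : nrm n ((Pt - P) *m c) <= mx_lbound nrm (P *m G)) :
  let Omega := msum [set c] (mx_img G (unit_ball nrm p)) in
  let alpha_m := (mx_lbound nrm (P *m G) - nrm n ((Pt - P) *m c)) /
                 (mx_lbound nrm (P *m G) + opnorm nrm ((Pt - P) *m G)) in
  forall alpha : R, 0 <= alpha <= alpha_m ->
    mx_img Pt (msum [set c] (sscale alpha (mx_img G (unit_ball nrm p))))
      `<=` mx_img P Omega.
Proof.
move=> Omega alpha_m alpha /andP[alpha_ge0 alpha_le] _
  [_ [_ -> [_ [_ [b b_le1 <-] <-] <-]] <-].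
set L := mx_lbound nrm (P *m G) in Hc alpha_le.
set a := nrm n ((Pt - P) *m c) in Hc alpha_le.
set K := opnorm nrm ((Pt - P) *m G) in alpha_le.
have K_ge0 : 0 <= K by exact: opnorm_ge0.
have [alpha_le1 aK_le] := alpha_m_bound (normf_ge0 (Hnrm n) _) Hc K_ge0 alpha_ge0 alpha_le.
set w := (Pt - P) *m c + alpha *: ((Pt - P) *m G *m b).
have w_le : nrm n w <= L * (1 - alpha).
  case: (Hnrm n) => ND _ _; apply: le_trans (ND _ _) (le_trans _ aK_le).
  by rewrite lerD2l ger0_normfZ // ler_wpM2l // opnorm_ub.
have [z PGz z_le] : exists2 z, P *m G *m z = w & nrm p z <= 1 - alpha.
  apply: (mx_lbound_preimage_le Hnrm) w_le; last by rewrite subr_ge0.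
  exists (pinvmx G *m pinvmx P *m w).
  by rewrite mulmxA mulmx_row_free_pinv ?mul1mx // /row_free ?HP ?HG.
exists (c + G *m (z + alpha *: b)).
  exists c => //; exists (G *m (z + alpha *: b)) => //; exists (z + alpha *: b) => //.
  case: (Hnrm p) => ND _ _; apply: le_trans (ND _ _) _.
  have alpha_b_le : alpha * nrm p b <= alpha by rewrite ler_piMr.
  by rewrite ger0_normfZ //; lra.
rewrite !mulmxDr !mulmxA PGz /w !scalemxAr !mulmxA !mulmxBl.
move: (P *m c) (Pt *m c) (P *m G *m (alpha *: b)) (Pt *m G *m (alpha *: b)) => x1 x2 y1 y2.
by rewrite -(addrA (x2 - x1)) subrK addrA [x1 + _]addrC subrK.
Qed.
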